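(* Let $G$ be a connected graph. If every optimal vector coloring of $G$ is locally injective, then $G$ is a core; likewise, if every optimal strict vector coloring of $G$ is locally injective, then $G$ is a core. In particular, if $G$ is uniquely vector colorable and its unique optimal vector coloring is locally injective, then $G$ is a core.
   Context: A vector $t$-coloring of $G$ ($t\ge2$) assigns unit vectors $p_i\in\mathbb{R}^d$ to vertices with $\langle p_i,p_j\rangle\le-1/(t-1)$ for all edges $ij$; it is strict if equality holds on all edges. $\chi_v(G)$ (resp. $\chi_{sv}(G)$) is the least $t\ge2$ admitting a (resp. strict) vector $t$-coloring; an optimal (strict) vector coloring is a (strict) vector $\chi_v(G)$- (resp. $\chi_{sv}(G)$-) coloring. $G$ is uniquely vector colorable if any two optimal vector colorings have the same Gram matrix. A vector coloring is locally injective if no two distinct vertices having a common neighbor are assigned the same vector. A graph homomorphism $G\to H$ is an adjacency-preserving map $V(G)\to V(H)$; $G$ is a core if every homomorphism $G\to G$ is an automorphism (equivalently, $G$ has no homomorphism to a proper subgraph). *)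

From HB Require Import structures.
From mathcomp Require Import all_boot all_order all_algebra.
From mathcomp Require Import reals.
Set Implicit Arguments. Unset Strict Implicit. Unset Printing Implicit Defensive.
Import Order.TTheory GRing.Theory Num.Theory.
Local Open Scope ring_scope.

(* A graph is given by a finite vertex type T and an adjacency relation e
   (assumed symmetric and irreflexive in the theorem). *)

Section VC.
Variable R : realType.
Variable T : finType.
Variable e : rel T.

Definition dotv (d : nat) (u v : 'rV[R]_d) : R := (u *m v^T) 0 0.

Definition vector_coloring (t : R) (d : nat) (p : T -> 'rV[R]_d) : Prop :=
  2 <= t /\ (forall i, dotv (p i) (p i) = 1) /\
  (forall i j, e i j -> dotv (p i) (p j) <= - (t - 1)^-1).

Definition strict_vector_coloring (t : R) (d : nat) (p : T -> 'rV[R]_d) : Prop :=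
  2 <= t /\ (forall i, dotv (p i) (p i) = 1) /\
  (forall i j, e i j -> dotv (p i) (p j) = - (t - 1)^-1).

Definition admits_vc (t : R) : Prop := exists d (p : T -> 'rV[R]_d), vector_coloring t p.
Definition admits_svc (t : R) : Prop := exists d (p : T -> 'rV[R]_d), strict_vector_coloring t p.

Definition optimal_vc (d : nat) (p : T -> 'rV[R]_d) : Prop :=
  exists t, vector_coloring t p /\ forall t', admits_vc t' -> t <= t'.

Definition optimal_svc (d : nat) (p : T -> 'rV[R]_d) : Prop :=
  exists t, strict_vector_coloring t p /\ forall t', admits_svc t' -> t <= t'.

Definition uniquely_vc : Prop :=
  forall d1 (p1 : T -> 'rV[R]_d1) d2 (p2 : T -> 'rV[R]_d2),
    optimal_vc p1 -> optimal_vc p2 ->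
    forall i j, dotv (p1 i) (p1 j) = dotv (p2 i) (p2 j).

Definition locally_injective (d : nat) (p : T -> 'rV[R]_d) : Prop :=
  forall i j k, e i k -> e j k -> i != j -> p i != p j.

End VC.

Section Core.
Variable T : finType.
Variable e : rel T.

Definition graph_hom (f : T -> T) : Prop := forall x y, e x y -> e (f x) (f y).

Definition graph_aut (f : T -> T) : Prop :=
  bijective f /\ forall x y, e x y = e (f x) (f y).

Definition is_core : Prop := forall f, graph_hom f -> graph_aut f.

Definition connected_graph : Prop := forall x y, connect e x y.
End Core.

(* An endomorphism f pulls an optimal (strict) vector colouring p back to an
   optimal one, p \o f, and if p \o f is locally injective then so is f.
   Under unique vector colourability p \o f has the Gram matrix of p, hence is
   locally injective along with p.  A locally injective endomorphism of a
   finite connected graph is an automorphism: some power of it is idempotent,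
   and the fixed points of that power are closed under adjacency.  Optimal
   colourings exist by compactness, once every colouring has been moved into
   dimension |V| by reflections, which preserve its Gram matrix. *)

From mathcomp Require Import all_boot all_order all_algebra.
From mathcomp Require Import all_classical all_reals all_analysis.
From mathcomp Require Import zify ring lra.
Set Implicit Arguments. Unset Strict Implicit. Unset Printing Implicit Defensive.
Import Order.TTheory GRing.Theory Num.Theory.
Import numFieldNormedType.Exports.
Local Open Scope ring_scope.
Local Open Scope classical_set_scope.

Section IterIdempotent.
Variable T : finType.

Lemma iter_collision (f : T -> T) : exists a b, (a < b)%N /\ iter a f =1 iter b f.
Proof.
pose F (k : 'I_#|{ffun T -> T}|.+1) := [ffun x => iter k f x].
have /injectivePn[a [b neq_ab Fab]] : ~~ injectiveb F.
  by apply/injectiveP => /leq_card; rewrite card_ord ltnn.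
have iter_ab x : iter a f x = iter b f x.
  by have := congr1 (fun g : {ffun T -> T} => g x) Fab; rewrite !ffunE.
case: (ltngtP a b) => [lt_ab|lt_ba|/val_inj eq_ab]; last by rewrite eq_ab eqxx in neq_ab.
- by exists a, b.
- by exists b, a; split=> // x; rewrite iter_ab.
Qed.

Lemma iter_idempotent (f : T -> T) :
  exists2 n, (0 < n)%N & forall x, iter n f (iter n f x) = iter n f x.
Proof.
have [a [b [lt_ab iter_ab]]] := iter_collision f.
pose p := (b - a)%N.
have shift n x : (a <= n)%N -> iter (p + n) f x = iter n f x.
  move=> le_an; have -> : (p + n = (n - a) + b)%N by rewrite /p; lia.
  by rewrite iterD -iter_ab -iterD subnK.
have periodic m n x : (a <= n)%N -> iter (m * p + n) f x = iter n f x.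
  move=> le_an; elim: m => [|m IHm] //.
  by rewrite mulSn -addnA iterD IHm -iterD shift.
exists (a.+1 * p)%N; first by rewrite muln_gt0 subn_gt0 lt_ab.
by move=> x; rewrite -iterD periodic // /p; nia.
Qed.

End IterIdempotent.

Section LocallyInjectiveEndomorphism.
Variables (T : finType) (e : rel T).

(* [locally_injective e] of the statement, for maps into any [eqType]. *)
Definition locally_injective_map (U : eqType) (f : T -> U) : Prop :=
  forall i j k, e i k -> e j k -> i != j -> f i != f j.

Lemma locally_injective_comp (U : eqType) (g : T -> U) (f : T -> T) :
  locally_injective_map (g \o f) -> locally_injective_map f.
Proof.
move=> li_gf i j k eik ejk /(li_gf _ _ _ eik ejk).
by apply: contraNneq => /= ->.
Qed.

Lemma graph_hom_iter n f : graph_hom e f -> graph_hom e (iter n f).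
Proof. by move=> hom_f; elim: n => //= n IHn x y /IHn /hom_f. Qed.

Lemma locally_injective_iter n f : graph_hom e f -> locally_injective_map f ->
  locally_injective_map (iter n f).
Proof.
move=> hom_f li_f; elim: n => // n IHn i j k eik ejk /(IHn _ _ _ eik ejk) neq.
by apply: (li_f _ _ (iter n f k)) => //; apply: graph_hom_iter.
Qed.

Lemma locally_injective_map_edgeless (U : eqType) (g : T -> U) :
  (forall x y, ~~ e x y) -> locally_injective_map g.
Proof. by move=> no_edge i j k; rewrite (negPf (no_edge i k)). Qed.

Hypothesis e_sym : symmetric e.
Hypothesis e_conn : connected_graph e.

(* A neighbour w of a fixed point v and its image r w are both adjacent to v
   and have the same image, so w is fixed too. *)
Lemma retraction_id r : graph_hom e r -> locally_injective_map r ->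
  (forall x, r (r x) = r x) -> forall x, r x = x.
Proof.
move=> hom_r li_r idem_r.
have fixed_nbr v w : r v = v -> e v w -> r w = w.
  move=> rv evw; apply/eqP; apply: contraTT isT => neq_rw.
  have erwv : e (r w) v by rewrite -rv e_sym hom_r.
  have ewv : e w v by rewrite e_sym.
  by have := li_r _ _ _ erwv ewv neq_rw; rewrite idem_r eqxx.
have closed_fix : fingraph.closed e [pred y | r y == y].
  move=> u v euv /=; apply/eqP/eqP => [ru | rv]; first exact: fixed_nbr ru euv.
  by apply: fixed_nbr rv _; rewrite e_sym.
move=> x; apply/eqP.
by have := closed_connect closed_fix (e_conn (r x) x); rewrite !inE idem_r eqxx => <-.
Qed.

Lemma locally_injective_hom_aut f : graph_hom e f -> locally_injective_map f ->
  graph_aut e f.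
Proof.
move=> hom_f li_f; have [[|n] // _ idem] := iter_idempotent f.
have id_n := retraction_id (graph_hom_iter n.+1 hom_f)
  (locally_injective_iter n.+1 hom_f li_f) idem.
have gK : cancel f (iter n f) by move=> x; rewrite -iterSr id_n.
have fK : cancel (iter n f) f by move=> x; rewrite -iterS id_n.
split; first by exists (iter n f).
by move=> x y; apply/idP/idP => [/hom_f|/(graph_hom_iter n hom_f)]; rewrite ?gK.
Qed.

Lemma is_core_of_locally_injective_comp (U : eqType) (g : T -> U) :
  (forall f, graph_hom e f -> locally_injective_map (g \o f)) -> is_core e.
Proof.
move=> li_gf f hom_f; apply: locally_injective_hom_aut => //.
exact: locally_injective_comp (li_gf f hom_f).
Qed.

End LocallyInjectiveEndomorphism.

Section DotProduct.
Variables (R : realType) (d : nat).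
Implicit Types u v w : 'rV[R]_d.

Lemma dotvE u v : dotv u v = \sum_k u 0 k * v 0 k.
Proof. by rewrite /dotv mxE; apply: eq_bigr => k _; rewrite mxE. Qed.

Lemma dotvC u v : dotv u v = dotv v u.
Proof. by rewrite !dotvE; apply: eq_bigr => k _; rewrite mulrC. Qed.

Lemma dotvDl u v w : dotv (u + v) w = dotv u w + dotv v w.
Proof. by rewrite /dotv mulmxDl mxE. Qed.

Lemma dotvBl u v w : dotv (u - v) w = dotv u w - dotv v w.
Proof. by rewrite /dotv mulmxBl !mxE. Qed.

Lemma dotvBr u v w : dotv w (u - v) = dotv w u - dotv w v.
Proof. by rewrite dotvC dotvBl !(dotvC w). Qed.

Lemma dotvZl a u w : dotv (a *: u) w = a * dotv u w.
Proof. by rewrite /dotv -scalemxAl mxE. Qed.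

Lemma dotvZr a u w : dotv w (a *: u) = a * dotv w u.
Proof. by rewrite dotvC dotvZl dotvC. Qed.

Lemma dotv0r u : dotv u 0 = 0.
Proof. by rewrite /dotv trmx0 mulmx0 mxE. Qed.

Lemma dotvv_ge0 u : 0 <= dotv u u.
Proof. by rewrite dotvE sumr_ge0 // => k _; rewrite -expr2 sqr_ge0. Qed.

Lemma dotvv_eq0 u : (dotv u u == 0) = (u == 0).
Proof.
apply/idP/eqP => [|->]; last by rewrite dotv0r.
rewrite dotvE psumr_eq0 => [/allP u0|k _]; last by rewrite -expr2 sqr_ge0.
apply/rowP => k; have := u0 k (mem_index_enum k).
by rewrite mulf_eq0 orbb mxE => /eqP.
Qed.

Lemma dotv_unit_ge u v : dotv u u = 1 -> dotv v v = 1 -> -1 <= dotv u v.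
Proof.
move=> u1 v1; have := dotvv_ge0 (u + v).
by rewrite !dotvDl !(dotvC _ (u + v)) !dotvDl u1 v1 (dotvC v u); lra.
Qed.

Lemma dotv_unit_eq1 u v : dotv u u = 1 -> dotv v v = 1 -> dotv u v = 1 -> u = v.
Proof.
move=> u1 v1 uv1; apply/eqP; rewrite -subr_eq0 -dotvv_eq0.
by rewrite !dotvBl !dotvBr u1 v1 uv1 (dotvC v u) uv1 !subrr.
Qed.

Lemma dotv_delta u k : dotv u (delta_mx 0 k) = u 0 k.
Proof. by rewrite /dotv trmx_delta -colE mxE. Qed.

Definition reflection w u := u - (2 / dotv w w * dotv u w) *: w.

Lemma dotv_reflection w u v : dotv (reflection w u) (reflection w v) = dotv u v.
Proof.
rewrite !dotvBl !dotvBr !dotvZl !dotvZr (dotvC w v).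
have [->|w0] := eqVneq (dotv w w) 0; first by rewrite invr0 !mulr0 !mul0r !subr0.
by field.
Qed.

Lemma reflection_swap u v : dotv u u = dotv v v -> reflection (u - v) u = v.
Proof.
move=> uv; rewrite /reflection.
have [w0|] := eqVneq (u - v) 0; first by rewrite w0 scaler0 subr0; apply/subr0_eq.
rewrite -dotvv_eq0 => w0.
suff -> : 2 / dotv (u - v) (u - v) * dotv u (u - v) = 1 by rewrite scale1r subKr.
move: w0; rewrite !dotvBl !dotvBr (dotvC v u) uv => w0.
by field; move: w0; apply: contra => /eqP h; apply/eqP; lra.
Qed.

End DotProduct.

Section GramReduction.
Variables (R : realType) (T : finType).

Definition gram_eq d1 d2 (p : T -> 'rV[R]_d1) (q : T -> 'rV[R]_d2) : Prop :=
  forall i j, dotv (q i) (q j) = dotv (p i) (p j).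

Lemma gram_eq_trans d1 d2 d3 (p : T -> 'rV[R]_d1) (q : T -> 'rV[R]_d2)
    (r : T -> 'rV[R]_d3) :
  gram_eq p q -> gram_eq q r -> gram_eq p r.
Proof. by move=> pq qr i j; rewrite qr pq. Qed.

Lemma gram_eq_unit_inj d1 d2 (p : T -> 'rV[R]_d1) (q : T -> 'rV[R]_d2) :
  (forall i, dotv (p i) (p i) = 1) -> gram_eq p q -> forall i j, q i = q j -> p i = p j.
Proof.
move=> p1 pq i j qij; apply: dotv_unit_eq1; rewrite ?p1 //.
by rewrite -pq qij pq p1.
Qed.

Lemma dotv_row_mx0 m d (u v : 'rV[R]_d) :
  dotv (row_mx (0 : 'rV_m) u) (row_mx 0 v) = dotv u v.
Proof. by rewrite /dotv tr_row_mx mul_row_col mul0mx add0r. Qed.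

Lemma gram_eq_pad d n (p : T -> 'rV[R]_d) : (d <= n)%N ->
  exists q : T -> 'rV[R]_n, gram_eq p q.
Proof.
move=> le_dn; rewrite -(subnK le_dn).
by exists (fun i => row_mx 0 (p i)) => i j; apply: dotv_row_mx0.
Qed.

Lemma exists_orthogonal d (p : T -> 'rV[R]_d) : (#|T| < d)%N ->
  exists2 u : 'rV[R]_d, u != 0 & forall i, dotv (p i) u = 0.
Proof.
move=> lt_Td; pose P := \matrix_(k < #|T|) p (enum_val k).
have /rowV0Pn[u /sub_kermxP uP u0] : kermx P^T != 0.
  by rewrite -mxrank_eq0 mxrank_ker -lt0n subn_gt0 (leq_ltn_trans (rank_leq_col _)).
exists u => // i; rewrite dotvC.
have /rowP/(_ (enum_rank i)) := uP; rewrite !mxE => <-.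
by rewrite dotvE; apply: eq_bigr => k _; rewrite !mxE enum_rankK.
Qed.

(* A reflection sending a unit normal of all the [p i] to the last basis
   vector makes their last coordinates vanish. *)
Lemma gram_eq_drop d (p : T -> 'rV[R]_d.+1) : (#|T| < d.+1)%N ->
  exists q : T -> 'rV[R]_d, gram_eq p q.
Proof.
move=> lt_Td; have [u u0 pu] := exists_orthogonal p lt_Td.
have uu_gt0 : 0 < dotv u u by rewrite lt_def dotvv_eq0 u0 dotvv_ge0.
pose un := (Num.sqrt (dotv u u))^-1 *: u.
have un1 : dotv un un = 1.
  rewrite dotvZl dotvZr mulrA -expr2 exprVn sqr_sqrtr ?ltW //.
  by rewrite mulVf // gt_eqF.
pose el : 'rV[R]_d.+1 := delta_mx 0 ord_max.
have el1 : dotv el el = 1 by rewrite dotv_delta mxE !eqxx.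
pose rf := reflection (un - el).
have rf_un : rf un = el by apply: reflection_swap; rewrite un1 el1.
have last0 i : rf (p i) 0 ord_max = 0.
  by rewrite -dotv_delta -/el -rf_un dotv_reflection dotvZr pu mulr0.
exists (fun i => \row_k rf (p i) 0 (widen_ord (leqnSn d) k)) => i j.
rewrite -(dotv_reflection (un - el)) (dotvE (rf (p i))) big_ord_recr /= last0 mul0r addr0.
by rewrite dotvE; apply: eq_bigr => k _; rewrite !mxE.
Qed.

Lemma gram_eq_card d (p : T -> 'rV[R]_d) : exists q : T -> 'rV[R]_#|T|, gram_eq p q.
Proof.
elim: d p => [|d IHd] p; first exact: gram_eq_pad.
have [le_dT|lt_Td] := leqP d.+1 #|T|; first exact: gram_eq_pad.
have [q pq] := gram_eq_drop p lt_Td.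
by have [r qr] := IHd q; exists r; apply: gram_eq_trans pq qr.
Qed.

End GramReduction.

Section Threshold.
Variable R : realType.

Lemma thresholdK (s : R) : - ((1 - s^-1) - 1)^-1 = s.
Proof. by rewrite addrC addKr invrN invrK opprK. Qed.

Lemma threshold_lt0 (t : R) : 2 <= t -> - (t - 1)^-1 < 0.
Proof. by move=> t2; rewrite oppr_lt0 invr_gt0; lra. Qed.

Lemma threshold_ge_N1 (t : R) : 2 <= t -> -1 <= - (t - 1)^-1.
Proof. by move=> t2; rewrite lerN2 invf_le1; lra. Qed.

Lemma threshold_min (P : R -> Prop) (s : R) : -1 <= s -> (exists t, P t) ->
  (forall t, P t -> 2 <= t /\ s <= - (t - 1)^-1) ->
  2 <= 1 - s^-1 /\ forall t, P t -> 1 - s^-1 <= t.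
Proof.
move=> s_ge [t0 Pt0] Pbound.
have s_lt0 : s < 0.
  by have [t0_ge2 s_le] := Pbound _ Pt0; apply: le_lt_trans s_le (threshold_lt0 _).
have sVs : s * s^-1 = 1 by rewrite mulfV ?lt_eqF.
have sV_lt0 : s^-1 < 0 by rewrite invr_lt0.
split=> [|t /Pbound[t_ge2 s_le]]; first by nra.
have tV : (t - 1) * (t - 1)^-1 = 1 by rewrite mulfV //; apply/eqP; lra.
have : 0 < (t - 1)^-1 by rewrite invr_gt0; lra.
by nra.
Qed.

End Threshold.

Section Simplex.
Variables (R : realType) (n : nat).

Lemma dotv_const1 : dotv (const_mx 1 : 'rV[R]_n) (const_mx 1) = n%:R.
Proof.
by rewrite dotvE (eq_bigr (fun=> 1)) => [|k _]; rewrite ?sumr_const ?card_ord // !mxE mulr1.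
Qed.

(* Centre the standard basis at its barycentre and rescale. *)
Lemma exists_regular_simplex : (1 < n)%N -> exists q : 'I_n -> 'rV[R]_n,
  forall a b, dotv (q a) (q b) = if a == b then 1 else - (n%:R - 1)^-1.
Proof.
move=> n_gt1; set m : R := n%:R; have m_gt1 : 1 < m by rewrite ltr1n.
have m0 : m != 0 by rewrite gt_eqF //; lra.
have m1 : m - 1 != 0 by apply/eqP; lra.
pose c := Num.sqrt (m / (m - 1)).
have c2 : c * c = m / (m - 1) by rewrite -expr2 sqr_sqrtr // divr_ge0 //; lra.
pose q a := c *: (delta_mx 0 a - m^-1 *: const_mx 1 : 'rV[R]_n).
exists q => a b.
rewrite !(dotvZl, dotvZr, dotvBl, dotvBr) dotv_const1 !(dotvC _ (const_mx 1)).
rewrite !dotv_delta !mxE /= [b == a]eq_sym mulrA c2 -/m.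
by case: (a == b) => /=; field; rewrite m0 m1.
Qed.

End Simplex.

Lemma closed_eq_continuous (R : realType) (X : topologicalType) (f g : X -> R) :
  continuous f -> continuous g -> closed [set x | f x = g x].
Proof.
move=> cf cg; have -> : [set x | f x = g x] = (f \- g) @^-1` [set r | r = 0].
  by apply/seteqP; split=> x /= => [->|/eqP]; rewrite ?subrr // subr_eq0 => /eqP.
apply: preimage_closed; last exact: closed_eq.
by move=> x _; apply: continuousB; [apply: cf | apply: cg].
Qed.

Section Configurations.
Variables (R : realType) (T : finType).
Local Notation N := #|T|.
Local Notation X := 'rV[R]_(N * N).

(* A family of [N] vectors of [R^N] is stored as a single row vector, so that
   the Heine-Borel theorem for row vectors applies. *)
Definition config (v : X) (i : T) : 'rV[R]_N := row (enum_rank i) (vec_mx v).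

Definition encode (q : T -> 'rV[R]_N) : X := mxvec (\matrix_k q (enum_val k)).

Lemma config_encode q i : config (encode q) i = q i.
Proof. by rewrite /config /encode mxvecK rowK enum_rankK. Qed.

Definition config_dot (v : X) i j := dotv (config v i) (config v j).

Lemma continuous_config_dot i j : continuous (fun v => config_dot v i j).
Proof.
have -> : (fun v => config_dot v i j) = fun v =>
    \sum_l v 0 (mxvec_index (enum_rank i) l) * v 0 (mxvec_index (enum_rank j) l).
  by apply/funext => v; rewrite /config_dot dotvE; apply: eq_bigr => l _; rewrite !mxE.
apply: (continuous_big (op := +%R) add_continuous) => l _ v.
by apply: continuousM; apply: coord_continuous.
Qed.

Definition unit_configs : set X := [set v | forall i, config_dot v i i = 1].

Lemma closed_unit_configs : closed unit_configs.
Proof.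
have -> : unit_configs = \bigcap_(i in setT) [set v | config_dot v i i = 1].
  by apply/seteqP; split=> v /= v1 i => [_|]; apply: v1.
apply: closed_bigI => i _; apply: closed_eq_continuous.
  exact: continuous_config_dot.
exact: cst_continuous.
Qed.

Lemma coord_unit_bound d (u : 'rV[R]_d) k : dotv u u = 1 -> -1 <= u 0 k <= 1.
Proof.
rewrite dotvE (bigD1 k) //= => uu1.
have : 0 <= \sum_(l | l != k) u 0 l * u 0 l by apply: sumr_ge0 => l _; rewrite -expr2 sqr_ge0.
by move=> rest_ge0; apply/andP; split; nra.
Qed.

Lemma compact_unit_configs : compact unit_configs.
Proof.
apply: subclosed_compact closed_unit_configs
  (rV_compact (fun _ => @segment_compact R (-1) 1)) _.
move=> v v1 k; case/mxvec_indexP: k => a l /=.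
have := coord_unit_bound l (v1 (enum_val a)).
by rewrite in_itv /= !mxE enum_valK.
Qed.

End Configurations.

Section OptimalColorings.
Variables (R : realType) (T : finType) (e : rel T).
Hypothesis e_irr : irreflexive e.
Local Notation N := #|T|.
Local Notation X := 'rV[R]_(N * N).

Lemma strict_vector_coloringW t d (p : T -> 'rV[R]_d) :
  strict_vector_coloring e t p -> vector_coloring e t p.
Proof. by case=> t2 [p1 pe]; do 2!split=> //; move=> i j /pe ->. Qed.

Lemma admits_svcW (t : R) : admits_svc e t -> admits_vc e t.
Proof. by case=> d [p /strict_vector_coloringW vc]; exists d, p. Qed.

Lemma admits_svc_card a b : e a b -> admits_svc e (N%:R : R).
Proof.
move=> eab; have N_gt1 : (1 < N)%N.
  by apply/card_gt1P; exists a, b; split=> //; apply: contraTneq eab => ->; rewrite e_irr.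
have [q qq] := exists_regular_simplex R N_gt1.
exists N, (q \o enum_rank); split; first by rewrite (ler_nat R 2).
split=> [i|i j eij]; rewrite /= qq; first by rewrite eqxx.
by rewrite (inj_eq enum_rank_inj); case: eqP eij => // ->; rewrite e_irr.
Qed.

Lemma admits_config_svc t : admits_svc e t ->
  exists2 v : X, unit_configs v & forall i j, e i j -> config_dot v i j = - (t - 1)^-1.
Proof.
case=> d [p [_ [p1 pe]]]; have [q pq] := gram_eq_card p.
by exists (encode q) => [i|i j eij]; rewrite /config_dot !config_encode pq ?p1 ?pe.
Qed.

Definition max_edge_dot (v : X) : R :=
  \big[Order.max/-1]_(x : T * T | e x.1 x.2) config_dot v x.1 x.2.

Lemma edge_dot_le_max v i j : e i j -> config_dot v i j <= max_edge_dot v.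
Proof.
move=> eij; rewrite /max_edge_dot.
exact: (le_bigmax_cond _ (fun x : T * T => config_dot v x.1 x.2) (j := (i, j))).
Qed.

Lemma continuous_max_edge_dot : continuous max_edge_dot.
Proof.
apply: (continuous_big (op := Order.max) max_continuous) => x _.
exact: continuous_config_dot.
Qed.

Lemma admits_config_vc t : admits_vc e t ->
  exists2 v : X, unit_configs v & max_edge_dot v <= - (t - 1)^-1.
Proof.
case=> d [p [t2 [p1 pe]]]; have [q pq] := gram_eq_card p.
exists (encode q) => [i|]; first by rewrite /config_dot config_encode pq p1.
apply: bigmax_le => [|x exy]; first exact: threshold_ge_N1.
by rewrite /config_dot !config_encode pq pe.
Qed.

Lemma exists_optimal_vc a b : e a b -> exists d (p : T -> 'rV[R]_d), optimal_vc e p.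
Proof.
move=> eab; have admN := admits_svc_card eab.
have [v0 v0_unit _] := admits_config_vc (admits_svcW admN).
have [v /set_mem v_unit v_min] := compact_EVT_min (ex_intro _ v0 v0_unit)
  (@compact_unit_configs R T) (continuous_subspaceT continuous_max_edge_dot).
pose s := max_edge_dot v.
have s_ge : -1 <= s.
  by apply: le_trans (edge_dot_le_max v eab); apply: dotv_unit_ge; apply: v_unit.
have s_bound t : admits_vc e t -> 2 <= t /\ s <= - (t - 1)^-1.
  move=> adm_t; split; first by case: adm_t => d [p []].
  have [w w_unit w_le] := admits_config_vc adm_t.
  exact: le_trans (v_min _ (mem_set w_unit)) w_le.
have [t_ge2 t_min] := threshold_min s_ge (ex_intro _ _ (admits_svcW admN)) s_bound.
exists N, (config v), (1 - s^-1); split=> //; split=> //; split=> // i j eij.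
by rewrite thresholdK; apply: edge_dot_le_max.
Qed.

Definition equal_edge_configs a b : set X :=
  [set v | unit_configs v /\ forall i j, e i j -> config_dot v i j = config_dot v a b].

Lemma compact_equal_edge_configs a b : compact (equal_edge_configs a b).
Proof.
apply: subclosed_compact (@compact_unit_configs R T) _; last by move=> v [].
have -> : equal_edge_configs a b = @unit_configs R T `&`
    \bigcap_(x in [set x : T * T | e x.1 x.2])
      [set v | config_dot v x.1 x.2 = config_dot v a b].
  apply/seteqP; split=> v [v_unit v_eq]; split=> //.
    by case=> i j /= eij; apply: v_eq.
  by move=> i j eij; apply: (v_eq (i, j)).
apply: closedI; first exact: closed_unit_configs.
by apply: closed_bigI => x _; apply: closed_eq_continuous; apply: continuous_config_dot.
Qed.

Lemma exists_optimal_svc a b : e a b -> exists d (p : T -> 'rV[R]_d), optimal_svc e p.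
Proof.
move=> eab; have admN := admits_svc_card eab.
have [v0 v0_unit v0_eq] := admits_config_svc admN.
have v0_in : equal_edge_configs a b v0 by split=> // i j /v0_eq ->; rewrite v0_eq.
have [v /set_mem [v_unit v_eq] v_min] := compact_EVT_min (ex_intro _ v0 v0_in)
  (@compact_equal_edge_configs a b)
  (continuous_subspaceT (@continuous_config_dot R T a b)).
pose s := config_dot v a b.
have s_ge : -1 <= s by apply: dotv_unit_ge; apply: v_unit.
have s_bound t : admits_svc e t -> 2 <= t /\ s <= - (t - 1)^-1.
  move=> adm_t; split; first by case: adm_t => d [p []].
  have [w w_unit w_eq] := admits_config_svc adm_t.
  have w_in : equal_edge_configs a b w by split=> // i j /w_eq ->; rewrite w_eq.
  by rewrite -(w_eq a b eab); apply: v_min; apply: mem_set.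
have [t_ge2 t_min] := threshold_min s_ge (ex_intro _ _ admN) s_bound.
exists N, (config v), (1 - s^-1); split=> //; split=> //; split=> // i j eij.
by rewrite thresholdK; apply: v_eq.
Qed.

End OptimalColorings.

Section HomComposition.
Variables (R : realType) (T : finType) (e : rel T) (f : T -> T).
Hypothesis hom_f : graph_hom e f.

Lemma optimal_vc_comp d (p : T -> 'rV[R]_d) : optimal_vc e p -> optimal_vc e (p \o f).
Proof.
case=> t [[t2 [p1 pe]] t_min]; exists t; split=> //.
by split=> //; split=> [i|i j /hom_f /pe //]; apply: p1.
Qed.

Lemma optimal_svc_comp d (p : T -> 'rV[R]_d) : optimal_svc e p -> optimal_svc e (p \o f).
Proof.
case=> t [[t2 [p1 pe]] t_min]; exists t; split=> //.
by split=> //; split=> [i|i j /hom_f /pe //]; apply: p1.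
Qed.

End HomComposition.

Theorem theorem4p3 (R : realType) (T : finType) (e : rel T)
    (e_sym : symmetric e) (e_irr : irreflexive e)
    (e_conn : connected_graph e) :
  ((forall d (p : T -> 'rV[R]_d), optimal_vc e p -> locally_injective e p) ->
     is_core e) /\
  ((forall d (p : T -> 'rV[R]_d), optimal_svc e p -> locally_injective e p) ->
     is_core e) /\
  (uniquely_vc R e ->
     (exists d (p : T -> 'rV[R]_d), optimal_vc e p /\ locally_injective e p) ->
     is_core e).
Proof.
have core_of := is_core_of_locally_injective_comp e_sym e_conn.
have [[a b] /= eab|no_edge] := pickP (fun x : T * T => e x.1 x.2); last first.
  have edgeless x y : ~~ e x y by rewrite (no_edge (x, y)).
  have core : is_core e.
    by apply: (core_of _ id) => f _; apply: locally_injective_map_edgeless.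
  by do 2!split=> // *.
split; [|split].
- move=> li_opt; have [d [p opt_p]] := exists_optimal_vc R e_irr eab.
  by apply: (core_of _ p) => f hom_f; apply/li_opt/optimal_vc_comp.
- move=> li_opt; have [d [p opt_p]] := exists_optimal_svc R e_irr eab.
  by apply: (core_of _ p) => f hom_f; apply/li_opt/optimal_svc_comp.
move=> uvc [d [p [opt_p li_p]]]; apply: (core_of _ p) => f hom_f i j k eik ejk.
have [t [[_ [p1 _]] _]] := opt_p.
have gram_pf : gram_eq p (p \o f).
  by move=> x y; rewrite (uvc _ _ _ _ opt_p (optimal_vc_comp hom_f opt_p)).
by move/(li_p _ _ _ eik ejk); apply: contraNneq => /(gram_eq_unit_inj p1 gram_pf) ->.
Qed.
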